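(* Let $R$ be a ring, $M$ an $R$-module and $\theta$ an infinite cardinal. Then $\mathrm{Aff}_2\subseteq\mathrm{Aff}_1$.
   Context: All formulas are from $\mathscr{L}_{\infty,\theta}(\tau_M)$ with fewer than $\theta$ free variables. For $\varphi(\bar x,\bar y)$ and $\bar a\in{}^{\lg(\bar y)}M$, $\varphi(M,\bar a)=\{\bar c: M\models\varphi[\bar c,\bar a]\}$. $\mathrm{Aff}_1$ is the set of formulas $\varphi(\bar x)$ with $\lg(\bar x)<\theta$ such that $\varphi(M)$ is closed under $(\bar a,\bar b,\bar c)\mapsto\bar a-\bar b+\bar c$ (coordinatewise). For an ordinal $\alpha_*$, formulas $\varphi(\bar x,\bar y)$ and $\bar\psi=\langle\psi_\alpha(\bar x,\bar y):\alpha<\alpha_*\rangle$, and $\bar b\in{}^{\lg\bar x}M$, $\bar a\in{}^{\lg\bar y}M$, let $\mathrm{set}_{\bar\psi}(\bar b,\bar a)=\{\alpha<\alpha_*:\bar b^\frown\bar a\in\psi_\alpha(M)\}$; $\mathrm{Set}_{\varphi,\bar\psi}(\bar a)=\{\mathrm{set}_{\bar\psi}(\bar c,\bar a):\bar c\in\varphi(M,\bar a)\}$; and $\mathrm{inter}_{\varphi,\bar\psi}(\bar a)$ is the set of pairs $(w_0,w_1)$ with $w_0\subseteq w_1\subseteq\alpha_*$ such that there are $u_0,u_1\in\mathrm{Set}_{\varphi,\bar\psi}(\bar a)$ with $w_1\subseteq u_1$ and $u_0\cap w_1=w_0$. $\mathrm{Aff}_2$ is the smallest class of formulas containing the atomic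 formulas and closed under: (a) arbitrary conjunctions; (b) existential quantification $\exists\bar x$; (c) if $\varphi(\bar x,\bar y)$ and $\psi_\alpha(\bar x,\bar y)$ ($\alpha<\alpha_*$) are in $\mathrm{Aff}_2$ with $\psi_\alpha(M)\subseteq\varphi(M)$ for all $\alpha<\alpha_*$, and $\Upsilon\subseteq\{(w_0,w_1):w_0\subseteq w_1\subseteq\alpha_*\}$, then the formula $\vartheta(\bar y)=\Theta_{\varphi,\bar\psi,\Upsilon}(\bar y)$ is in $\mathrm{Aff}_2$, where $M\models\vartheta[\bar a]$ iff $\Upsilon\subseteq\mathrm{inter}_{\varphi,\bar\psi}(\bar a)$. *)

From HB Require Import structures.
From mathcomp Require Import all_boot all_order all_algebra.
Set Implicit Arguments. Unset Strict Implicit. Unset Printing Implicit Defensive.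
Import GRing.Theory.
Local Open Scope ring_scope.

Section AffDefs.
Variables (R : pzRingType) (M : lmodType R) (Th : Type).

(* The cardinal theta is represented as the cardinality of the type Th. *)
Definition infinite_card : Prop := exists f : nat -> Th, injective f.

Definition lt_theta (I : Type) : Prop :=
  (exists f : I -> Th, injective f) /\ ~ (exists g : Th -> I, injective g).

Inductive term (I : Type) : Type :=
| TVar of I
| TZero
| TAdd of term I & term I
| TOpp of term I
| TScale of R & term I.

Fixpoint eval_term (I : Type) (a : I -> M) (t : term I) : M :=
  match t with
  | TVar i => a i
  | TZero => 0
  | TAdd t1 t2 => eval_term a t1 + eval_term a t2
  | TOpp t1 => - eval_term a t1
  | TScale r t1 => r *: eval_term a t1
  end.

Definition join (X Y : Type) (b : X -> M) (a : Y -> M) : X + Y -> M :=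
  fun s => match s with inl x => b x | inr y => a y end.

Definition Aff1 (I : Type) (phi : (I -> M) -> Prop) : Prop :=
  lt_theta I /\
  forall a b c : I -> M, phi a -> phi b -> phi c ->
    phi (fun i => a i - b i + c i).

Section ThetaConstr.
Variables (X Y A : Type) (phi : (X + Y -> M) -> Prop)
          (psi : A -> (X + Y -> M) -> Prop).

Definition set_psi (b : X -> M) (a : Y -> M) : A -> Prop :=
  fun al => psi al (join b a).

Definition in_SetF (a : Y -> M) (u : A -> Prop) : Prop :=
  exists c : X -> M, phi (join c a) /\ (forall al, u al <-> set_psi c a al).

Definition in_inter (a : Y -> M) (w : (A -> Prop) * (A -> Prop)) : Prop :=
  (forall al, w.1 al -> w.2 al) /\
  exists u0 u1, in_SetF a u0 /\ in_SetF a u1 /\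
    (forall al, w.2 al -> u1 al) /\
    (forall al, (u0 al /\ w.2 al) <-> w.1 al).

Definition Theta_form (Ups : (A -> Prop) * (A -> Prop) -> Prop) (a : Y -> M)
  : Prop := forall w, Ups w -> in_inter a w.
End ThetaConstr.

(* Aff_2, as a class of (context, defined relation) pairs. *)
Inductive Aff2 : forall I : Type, ((I -> M) -> Prop) -> Prop :=
| Aff2_atomic (I : Type) (t1 t2 : term I) :
    lt_theta I -> Aff2 (fun a : I -> M => eval_term a t1 = eval_term a t2)
| Aff2_conj (I K : Type) (phis : K -> (I -> M) -> Prop) :
    lt_theta I -> (forall k, Aff2 (phis k)) ->
    Aff2 (fun a : I -> M => forall k, phis k a)
| Aff2_exists (X Y : Type) (phi : (X + Y -> M) -> Prop) :
    lt_theta (X + Y) -> Aff2 phi ->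
    Aff2 (fun a : Y -> M => exists b : X -> M, phi (join b a))
| Aff2_subst (I J : Type) (sigma : I -> J) (phi : (I -> M) -> Prop) :
    lt_theta J -> Aff2 phi -> Aff2 (fun a : J -> M => phi (fun i => a (sigma i)))
| Aff2_Theta (X Y A : Type) (phi : (X + Y -> M) -> Prop)
    (psi : A -> (X + Y -> M) -> Prop) (Ups : (A -> Prop) * (A -> Prop) -> Prop) :
    lt_theta (X + Y) -> Aff2 phi -> (forall al, Aff2 (psi al)) ->
    (forall al d, psi al d -> phi d) ->
    (forall w, Ups w -> forall al, w.1 al -> w.2 al) ->
    Aff2 (Theta_form phi psi Ups).

End AffDefs.

(** Affine closure, i.e. closure of [phi(M)] under [(a, b, c) |-> a - b + c],
    is preserved by every clause generating Aff_2.  Atomic formulas are affine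
    because terms evaluate to additive, R-linear functions of the assignment.
    For [Theta_{phi,psi,Ups}], given for [a_j] (j = 1, 2, 3) witnesses [c0j]
    for [u0] and [c1j] for [u1], the new witnesses are [c01 - c12 + c13] and
    [c11 - c12 + c13]: on [w1] every [psi_alpha] contains [c12] and [c13], and
    an affinely closed set containing [y] and [z] contains [x] iff it contains
    [x - y + z]. *)
From mathcomp Require Import all_boot all_order all_algebra.
From Stdlib Require Import FunctionalExtensionality.
Set Implicit Arguments. Unset Strict Implicit. Unset Printing Implicit Defensive.
Import GRing.Theory.
Local Open Scope ring_scope.

Lemma lt_theta_inr (Th X Y : Type) : lt_theta Th (X + Y) -> lt_theta Th Y.
Proof.
move=> [[f f_inj] no_inj_from_Th]; split.
  by exists (fun y => f (inr y)) => y1 y2 /f_inj [].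
move=> [g g_inj]; apply: no_inj_from_Th.
by exists (fun t => inr (g t)) => t1 t2 [] /g_inj.
Qed.

Section AffineClosure.
Variables (R : pzRingType) (M : lmodType R).

Definition affine_comb (I : Type) (a b c : I -> M) : I -> M :=
  fun i => a i - b i + c i.

Definition affine_closed (I : Type) (P : (I -> M) -> Prop) : Prop :=
  forall a b c, P a -> P b -> P c -> P (affine_comb a b c).

Lemma affine_combK (I : Type) (a b c : I -> M) :
  affine_comb (affine_comb a b c) c b = a.
Proof. by apply: functional_extensionality => i; rewrite /affine_comb addrK subrK. Qed.

Lemma affine_closed_cancel (I : Type) (P : (I -> M) -> Prop) (a b c : I -> M) :
  affine_closed P -> P b -> P c -> P (affine_comb a b c) <-> P a.
Proof.
move=> P_aff Pb Pc; split=> [Pabc | Pa]; last exact: P_aff.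
by rewrite -(affine_combK a b c); apply: P_aff.
Qed.

Lemma join_affine_comb (X Y : Type) (b1 b2 b3 : X -> M) (a1 a2 a3 : Y -> M) :
  join (affine_comb b1 b2 b3) (affine_comb a1 a2 a3)
  = affine_comb (join b1 a1) (join b2 a2) (join b3 a3).
Proof. by apply: functional_extensionality => -[]. Qed.

Lemma eval_term_affine_comb (I : Type) (a b c : I -> M) (t : term R I) :
  eval_term (affine_comb a b c) t = eval_term a t - eval_term b t + eval_term c t.
Proof.
elim: t => //= [|t1 IH1 t2 IH2|t IH|r t IH].
- by rewrite subr0 addr0.
- by rewrite IH1 IH2 addrACA opprD (addrACA (eval_term a t1)).
- by rewrite IH !opprD.
- by rewrite IH scalerDr scalerBr.
Qed.

Lemma affine_closed_eq_term (I : Type) (t1 t2 : term R I) :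
  affine_closed (fun a : I -> M => eval_term a t1 = eval_term a t2).
Proof. by move=> a b c e_a e_b e_c; rewrite !eval_term_affine_comb e_a e_b e_c. Qed.

Lemma affine_closed_forall (I K : Type) (P : K -> (I -> M) -> Prop) :
  (forall k, affine_closed (P k)) -> affine_closed (fun a => forall k, P k a).
Proof. by move=> P_aff a b c Pa Pb Pc k; apply: P_aff. Qed.

Lemma affine_closed_exists (X Y : Type) (P : (X + Y -> M) -> Prop) :
  affine_closed P -> affine_closed (fun a : Y -> M => exists b, P (join b a)).
Proof.
move=> P_aff a1 a2 a3 [b1 P1] [b2 P2] [b3 P3].
by exists (affine_comb b1 b2 b3); rewrite join_affine_comb; apply: P_aff.
Qed.

Lemma affine_closed_subst (I J : Type) (sigma : I -> J) (P : (I -> M) -> Prop) :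
  affine_closed P -> affine_closed (fun a : J -> M => P (fun i => a (sigma i))).
Proof. by move=> P_aff a b c; apply: P_aff. Qed.

Section Theta.
Variables (X Y A : Type) (phi : (X + Y -> M) -> Prop)
          (psi : A -> (X + Y -> M) -> Prop).
Hypotheses (phi_aff : affine_closed phi) (psi_aff : forall al, affine_closed (psi al)).

Lemma in_SetF_affine_comb (a1 a2 a3 : Y -> M) (c1 c2 c3 : X -> M) :
  phi (join c1 a1) -> phi (join c2 a2) -> phi (join c3 a3) ->
  in_SetF phi psi (affine_comb a1 a2 a3)
    (set_psi psi (affine_comb c1 c2 c3) (affine_comb a1 a2 a3)).
Proof.
move=> phi1 phi2 phi3; exists (affine_comb c1 c2 c3); split=> //.
by rewrite join_affine_comb; apply: phi_aff.
Qed.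

Lemma set_psi_affine_comb (a1 a2 a3 : Y -> M) (c1 c2 c3 : X -> M) al :
  set_psi psi c2 a2 al -> set_psi psi c3 a3 al ->
  set_psi psi (affine_comb c1 c2 c3) (affine_comb a1 a2 a3) al <->
  set_psi psi c1 a1 al.
Proof. by rewrite /set_psi join_affine_comb; apply: affine_closed_cancel. Qed.

Lemma in_inter_affine_comb (a1 a2 a3 : Y -> M) w :
  in_inter phi psi a1 w -> in_inter phi psi a2 w -> in_inter phi psi a3 w ->
  in_inter phi psi (affine_comb a1 a2 a3) w.
Proof.
move=> [w01 [u01 [u11 [[c01 [phi01 S01]] [[c11 [phi11 S11]] [w1u11 w0E1]]]]]].
move=> [_ [_ [u12 [_ [[c12 [phi12 S12]] [w1u12 _]]]]]].
move=> [_ [_ [u13 [_ [[c13 [phi13 S13]] [w1u13 _]]]]]].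
have on_w1 c al : w.2 al ->
    set_psi psi (affine_comb c c12 c13) (affine_comb a1 a2 a3) al <->
    set_psi psi c a1 al.
  by move=> w1al; apply: set_psi_affine_comb; [apply/S12/w1u12 | apply/S13/w1u13].
split=> //; do 2 eexists; split; last split.
- exact: (in_SetF_affine_comb phi01 phi12 phi13).
- exact: (in_SetF_affine_comb phi11 phi12 phi13).
split=> al.
  by move=> w1al; apply/on_w1/S11/w1u11.
apply: iff_trans (w0E1 al); split=> -[u0al w1al]; split=> //.
  by apply/S01/(on_w1 _ _ w1al).
by apply/(on_w1 _ _ w1al)/S01.
Qed.

Lemma affine_closed_Theta (Ups : (A -> Prop) * (A -> Prop) -> Prop) :
  affine_closed (Theta_form phi psi Ups).
Proof. by move=> a1 a2 a3 T1 T2 T3 w Ups_w; apply: in_inter_affine_comb; auto. Qed.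

End Theta.
End AffineClosure.

Theorem proposition2p22 (R : pzRingType) (M : lmodType R) (Th : Type) :
  infinite_card Th ->
  forall (I : Type) (phi : (I -> M) -> Prop),
    @Aff2 R M Th I phi -> @Aff1 R M Th I phi.
Proof.
move=> _ I phi; elim=> {I phi}.
- by move=> I t1 t2 lt_I; split=> //; apply: affine_closed_eq_term.
- move=> I K phis lt_I _ IH; split=> //.
  by apply: affine_closed_forall => k; case: (IH k).
- move=> X Y phi lt_XY _ [_ phi_aff]; split; first exact: lt_theta_inr lt_XY.
  exact: affine_closed_exists.
- move=> I J sigma phi lt_J _ [_ phi_aff]; split=> //.
  exact: affine_closed_subst.
- move=> X Y A phi psi Ups lt_XY _ [_ phi_aff] _ IHpsi _ _.
  split; first exact: lt_theta_inr lt_XY.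
  by apply: affine_closed_Theta => // al; case: (IHpsi al).
Qed.
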